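(* There is an element-based generator $\mathds{G}$ such that for every countable collection of languages $\mathcal{L}=\{L_1,L_2,\dots\}$, every target language $K\in\mathcal{L}$, and every enumeration of $K$ with $o(1)$-noise and arbitrary omissions, $\mathds{G}$ generates in the limit from $K$; that is, there is a finite $n^\star$ such that $w_n\in K$ for all $n\ge n^\star$, where $w_n$ is the output of $\mathds{G}$ at step $n$.
   Context: The universe is $U=\mathbb{N}$ (a countable set of strings, identified with $\mathbb{N}$). A language is an infinite subset of $U$; a collection is a countable family $\mathcal{L}=\{L_1,L_2,\dots\}$ of languages. An enumeration is a sequence $x_1,x_2,\dots$ of distinct elements of $U$; write $S_n=\{x_1,\dots,x_n\}$. The empirical noise rate of a language $L$ is $R(L;x_{1:n})=\frac1n|\{t\le n: x_t\notin L\}|$. An enumeration of a language $L$ with $o(1)$-noise is a sequence in which every element of $L$ appears exactly once and $R(L;x_{1:n})\to 0$. An enumeration of $K$ with $o(1)$-noise and arbitrary omissions is an enumeration with $o(1)$-noise of some $\hat K\subseteq K$ with $|\hat K|=\infty$. An element-based generator is a sequence of maps $\mathds{G}_n$ that, given $x_1,\dots,x_n$, outputs $w_n\in U\setminus(S_n\cup\{w_1,\dots,w_{n-1}\})$; it may use the collection $\mathcal{L}$ but not the target $K$. *)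

From Stdlib Require Import Reals List Arith.
Import ListNotations.
Open Scope R_scope.

Definition language := nat -> bool.

(* A collection {L_1, L_2, ...} is indexed by nat (L i = L_{i+1}). *)
Definition collection := nat -> language.

Definition infinite_lang (L : language) : Prop :=
  forall m : nat, exists k : nat, (m <= k)%nat /\ L k = true.

(* Enumerations are 0-indexed sequences x : nat -> nat: x t = x_{t+1}. *)
Definition distinct_seq (x : nat -> nat) : Prop :=
  forall s t : nat, x s = x t -> s = t.

Definition prefix (x : nat -> nat) (n : nat) : list nat := map x (seq 0 n).

Definition noise_count (L : language) (x : nat -> nat) (n : nat) : nat :=
  length (filter (fun t => negb (L (x t))) (seq 0 n)).

(* Empirical noise rate R(L; x_{1:n}) (the value at n = 0 is irrelevant). *)
Definition noise_rate (L : language) (x : nat -> nat) (n : nat) : R :=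
  INR (noise_count L x n) / INR n.

Definition enum_o1_noise (L : language) (x : nat -> nat) : Prop :=
  distinct_seq x /\
  (forall k : nat, L k = true -> exists t : nat, x t = k) /\
  Un_cv (noise_rate L x) 0.

Definition enum_o1_noise_omissions (K : language) (x : nat -> nat) : Prop :=
  exists Khat : language,
    (forall k : nat, Khat k = true -> K k = true) /\
    infinite_lang Khat /\
    enum_o1_noise Khat x.

Definition generator := collection -> list nat -> nat.

Definition gen_output (G : generator) (C : collection) (x : nat -> nat) (n : nat) : nat :=
  G C (prefix x n).

Definition valid_generator_on (G : generator) (C : collection) : Prop :=
  forall x : nat -> nat, distinct_seq x ->
  forall n : nat, (1 <= n)%nat ->
    ~ In (gen_output G C x n) (prefix x n) /\
    (forall k : nat, (1 <= k)%nat -> (k < n)%nat ->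
       gen_output G C x k <> gen_output G C x n).

Definition generates_in_limit (G : generator) (C : collection) (K : language)
  (x : nat -> nat) : Prop :=
  exists nstar : nat, forall n : nat, (nstar <= n)%nat -> (1 <= n)%nat ->
    K (gen_output G C x n) = true.

(* On a sample p of size n the generator builds greedily a set T of indices below n:
   index k joins T when the intersection of the languages indexed by T and k is still
   infinite and misses at most a fraction (k+1)/(k+2) of p.  It answers with a fresh
   element of the final intersection.  The target L_z contains all but o(n) sample
   points, so for large n it passes the misses test at step z, whatever T was built
   before.  It also passes the infiniteness test: there are finitely many candidates
   for T, and for each of them a finite intersection with L_z could not contain the
   positive fraction of the n distinct sample points that it has to contain.  Hence z
   is eventually in T and every answer lies in L_z. *)

From Stdlib Require Import Reals List Lia Lra Classical ClassicalEpsilon FinFun.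
Import ListNotations.
Open Scope nat_scope.
Open Scope bool_scope.

Definition ultimately (P : nat -> Prop) : Prop := exists N, forall n, N <= n -> P n.

Lemma ultimately_mono (P Q : nat -> Prop) :
  (forall n, P n -> Q n) -> ultimately P -> ultimately Q.
Proof. intros PQ [N HN]; exists N; auto. Qed.

Lemma ultimately_and (P Q : nat -> Prop) :
  ultimately P -> ultimately Q -> ultimately (fun n => P n /\ Q n).
Proof.
  intros [N1 H1] [N2 H2]; exists (Nat.max N1 N2); split; [apply H1 | apply H2]; lia.
Qed.

Lemma ultimately_ge m : ultimately (fun n => m <= n).
Proof. exists m; auto. Qed.

Lemma ultimately_forall_in {A : Type} (P : A -> nat -> Prop) (l : list A) :
  (forall a, In a l -> ultimately (P a)) ->
  ultimately (fun n => forall a, In a l -> P a n).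
Proof.
  induction l as [|a l IH]; intros Hl.
  - exists 0; intros n _ b [].
  - apply (ultimately_mono (fun n => P a n /\ forall b, In b l -> P b n)).
    + intros n [Ha Hb] b [<- | Hbl]; auto.
    + apply ultimately_and.
      * apply Hl. now left.
      * apply IH. intros b Hb. apply Hl. now right.
Qed.

Lemma not_infinite_bounded (L : language) :
  ~ infinite_lang L -> exists F, forall y, F <= y -> L y = false.
Proof.
  intros HL. apply not_all_ex_not in HL as [F HF]. exists F. intros y Hy.
  destruct (L y) eqn:E; auto. exfalso; eauto.
Qed.

Definition misses (L : language) (p : list nat) : nat :=
  length (filter (fun y => negb (L y)) p).

Lemma misses_le_length L p : misses L p <= length p.
Proof. apply filter_length_le. Qed.

Lemma misses_full p : misses (fun _ => true) p = 0.
Proof. induction p; auto. Qed.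

Lemma misses_mono (L M : language) p :
  (forall y, L y = true -> M y = true) -> misses M p <= misses L p.
Proof.
  intros LM. unfold misses. induction p as [|y p IH]; simpl; auto.
  destruct (L y) eqn:E; [rewrite (LM y E) |]; simpl; [| destruct (M y); simpl]; lia.
Qed.

Lemma misses_andb (L M : language) p :
  misses (fun y => L y && M y) p <= misses L p + misses M p.
Proof.
  unfold misses. induction p as [|y p IH]; simpl; auto.
  destruct (L y), (M y); simpl; lia.
Qed.

Lemma length_le_misses_bounded (L : language) p F :
  NoDup p -> (forall y, F <= y -> L y = false) -> length p <= F + misses L p.
Proof.
  intros Hp HF. unfold misses. rewrite <- (filter_length L p).
  enough (length (filter L p) <= F) by lia.
  rewrite <- (length_seq F 0). apply NoDup_incl_length; [now apply NoDup_filter|].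
  intros y [_ Hy]%filter_In. apply in_seq.
  destruct (Nat.lt_ge_cases y F); [lia|]. rewrite HF in Hy; easy.
Qed.

Lemma noise_count_misses L x n : noise_count L x n = misses L (prefix x n).
Proof.
  unfold noise_count, misses, prefix. generalize (seq 0 n).
  induction l as [|t l IH]; simpl; auto. destruct (L (x t)); simpl; auto.
Qed.

Lemma length_prefix x n : length (prefix x n) = n.
Proof. unfold prefix. now rewrite length_map, length_seq. Qed.

Lemma NoDup_prefix x n : distinct_seq x -> NoDup (prefix x n).
Proof. intros Hx. apply Injective_map_NoDup; [exact Hx | apply seq_NoDup]. Qed.

Lemma rev_prefix_S x m : rev (prefix x (S m)) = x m :: rev (prefix x m).
Proof. unfold prefix. now rewrite seq_S, map_app, rev_app_distr. Qed.

Lemma noise_count_ultimately_small (L : language) x :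
  Un_cv (noise_rate L x) 0 ->
  forall m, 1 <= m -> ultimately (fun n => m * noise_count L x n <= n).
Proof.
  intros Hcv m Hm.
  assert (Hm' : (0 < INR m)%R) by (apply lt_0_INR; lia).
  destruct (Hcv (/ INR m)%R (Rinv_0_lt_compat _ Hm')) as [N HN].
  exists (Nat.max N 1). intros n Hn.
  specialize (HN n ltac:(lia)). unfold R_dist, noise_rate in HN.
  rewrite Rminus_0_r in HN. apply Rabs_def2 in HN as [HN _].
  assert (Hn' : (0 < INR n)%R) by (apply lt_0_INR; lia).
  apply Rmult_lt_compat_r with (r := (INR n * INR m)%R) in HN; [|nra].
  replace (INR (noise_count L x n) / INR n * (INR n * INR m))%R
    with (INR (noise_count L x n) * INR m)%R in HN by (field; lra).
  replace (/ INR m * (INR n * INR m))%R with (INR n) in HN by (field; lra).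
  rewrite <- mult_INR in HN. apply INR_lt in HN. lia.
Qed.

Definition inter (C : collection) (T : list nat) : language :=
  fun y => forallb (fun j => C j y) T.

Lemma inter_In C T j y : In j T -> inter C T y = true -> C j y = true.
Proof. intros Hj Hy. unfold inter in Hy. rewrite forallb_forall in Hy. auto. Qed.

Definition admissible (C : collection) (p : list nat) (T : list nat) (m : nat) : Prop :=
  misses (inter C T) p * (m + 1) <= m * length p /\ infinite_lang (inter C T).

Lemma admissible_S C p T m : admissible C p T m -> admissible C p T (S m).
Proof.
  intros [Hmiss Hinf]. split; [|exact Hinf].
  pose proof (misses_le_length (inter C T) p). nia.
Qed.

Fixpoint greedy (C : collection) (p : list nat) (k : nat) : list nat :=
  match k with
  | 0 => []
  | S k' =>
      let T := greedy C p k' in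
      if excluded_middle_informative (admissible C p (k' :: T) k) then k' :: T else T
  end.

Lemma greedy_admissible C p k : admissible C p (greedy C p k) k.
Proof.
  induction k as [|k IH]; simpl.
  - split; [now rewrite misses_full | intros m; now exists m].
  - destruct excluded_middle_informative; [assumption | now apply admissible_S].
Qed.

Lemma greedy_incl C p k k' : k <= k' -> incl (greedy C p k) (greedy C p k').
Proof.
  induction 1 as [|k' _ IH]; [apply incl_refl|].
  simpl. destruct excluded_middle_informative; [now apply incl_tl | exact IH].
Qed.

Fixpoint subsets (k : nat) : list (list nat) :=
  match k with
  | 0 => [[]]
  | S k' => subsets k' ++ map (cons k') (subsets k')
  end.

Lemma greedy_in_subsets C p k : In (greedy C p k) (subsets k).
Proof.
  induction k as [|k IH]; simpl; auto.
  apply in_or_app. destruct excluded_middle_informative; [right; now apply in_map | now left].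
Qed.

Definition target (C : collection) (p : list nat) : language :=
  inter C (greedy C p (length p)).

Lemma target_infinite C p : infinite_lang (target C p).
Proof. apply greedy_admissible. Qed.

Definition fresh (P : language) (forbidden : list nat) : nat :=
  let b := S (list_max forbidden) in
  match excluded_middle_informative (exists y, b <= y /\ P y = true) with
  | left H => proj1_sig (constructive_indefinite_description _ H)
  | right _ => b
  end.

Lemma fresh_ge P forbidden : S (list_max forbidden) <= fresh P forbidden.
Proof.
  unfold fresh. destruct excluded_middle_informative as [H|]; [|auto].
  exact (proj1 (proj2_sig (constructive_indefinite_description _ H))).
Qed.

Lemma fresh_notin P forbidden : ~ In (fresh P forbidden) forbidden.
Proof.
  intros Hin. pose proof (fresh_ge P forbidden).
  assert (Hmax := proj1 (list_max_le forbidden _) (le_n _)).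
  rewrite Forall_forall in Hmax. specialize (Hmax _ Hin). lia.
Qed.

Lemma fresh_in P forbidden : infinite_lang P -> P (fresh P forbidden) = true.
Proof.
  intros HP. unfold fresh. destruct excluded_middle_informative as [H|H].
  - exact (proj2 (proj2_sig (constructive_indefinite_description _ H))).
  - exfalso. apply H, HP.
Qed.

Definition respond (C : collection) (p h : list nat) : nat := fresh (target C p) (p ++ h).

(* [history C (rev p)] lists the answers to all nonempty prefixes of [p]; the sample
   is reversed so that the recursion peels off its last element. *)
Fixpoint history (C : collection) (r : list nat) : list nat :=
  match r with
  | [] => []
  | _ :: r' => let h := history C r' in h ++ [respond C (rev r) h]
  end.

Definition Gen : generator := fun C p => respond C p (history C (tl (rev p))).

Lemma gen_output_S C x m :
  gen_output Gen C x (S m) = respond C (prefix x (S m)) (history C (rev (prefix x m))).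
Proof. unfold gen_output, Gen. now rewrite rev_prefix_S. Qed.

Lemma history_prefix_S C x m :
  history C (rev (prefix x (S m))) =
  history C (rev (prefix x m)) ++ [gen_output Gen C x (S m)].
Proof.
  rewrite gen_output_S, <- (rev_involutive (prefix x (S m))), rev_prefix_S.
  now rewrite rev_involutive.
Qed.

Lemma gen_output_in_history C x m k :
  1 <= k <= m -> In (gen_output Gen C x k) (history C (rev (prefix x m))).
Proof.
  induction m as [|m IH]; intros Hk; [lia|].
  rewrite history_prefix_S. apply in_or_app.
  destruct (Nat.eq_dec k (S m)) as [->|]; [right; now left | left; apply IH; lia].
Qed.

Lemma Gen_valid C : valid_generator_on Gen C.
Proof.
  intros x _ [|m] Hn; [lia|].
  rewrite gen_output_S. unfold respond. split.
  - intros Hin. eapply fresh_notin, in_or_app. left; exact Hin.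
  - intros k Hk Hkn Heq. eapply fresh_notin, in_or_app. right.
    rewrite <- Heq. apply gen_output_in_history. lia.
Qed.

Lemma misses_inter_cons C j T p :
  misses (inter C (j :: T)) p <= misses (inter C T) p + misses (C j) p.
Proof. rewrite Nat.add_comm. apply (misses_andb (C j) (inter C T)). Qed.

Section Convergence.

Variables (C : collection) (z : nat) (x : nat -> nat) (Khat : language).
Hypothesis Khat_sub : forall y, Khat y = true -> C z y = true.
Hypothesis x_distinct : distinct_seq x.
Hypothesis noise_small :
  forall m, 1 <= m -> ultimately (fun n => m * noise_count Khat x n <= n).

Lemma misses_le_noise_count n : misses (C z) (prefix x n) <= noise_count Khat x n.
Proof. rewrite noise_count_misses. now apply misses_mono. Qed.

Lemma ultimately_extension_sparse :
  ultimately (fun n => forall T,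
    misses (inter C T) (prefix x n) * (z + 1) <= z * n ->
    misses (inter C (z :: T)) (prefix x n) * (S z + 1) <= S z * n).
Proof.
  apply (ultimately_mono (fun n => (z + 1) * (z + 2) * noise_count Khat x n <= n));
    [|apply noise_small; lia].
  intros n Hnoise T HT.
  pose proof (misses_inter_cons C z T (prefix x n)).
  pose proof (misses_le_noise_count n).
  (* z/(z+1) + 1/((z+1)(z+2)) = (z+1)/(z+2) *)
  nia.
Qed.

Lemma ultimately_extension_infinite T :
  ultimately (fun n =>
    misses (inter C T) (prefix x n) * (z + 1) <= z * n -> infinite_lang (inter C (z :: T))).
Proof.
  destruct (classic (infinite_lang (inter C (z :: T)))) as [Hinf|Hfin];
    [exists 0; auto|].
  apply not_infinite_bounded in Hfin as [F HF].
  apply (ultimately_mono (fun n => 2 * (z + 1) * noise_count Khat x n <= n /\ 2 * F * (z + 1) < n)).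
  - intros n [Hnoise Hlarge] HT. exfalso.
    pose proof (length_le_misses_bounded _ _ _ (NoDup_prefix x n x_distinct) HF) as Hlen.
    rewrite length_prefix in Hlen.
    pose proof (misses_inter_cons C z T (prefix x n)).
    pose proof (misses_le_noise_count n).
    nia.
  - apply ultimately_and; [apply noise_small; lia | apply ultimately_ge].
Qed.

Lemma ultimately_greedy_selects_target :
  ultimately (fun n => In z (greedy C (prefix x n) (S z))).
Proof.
  pose proof (ultimately_forall_in _ (subsets z)
                (fun T _ => ultimately_extension_infinite T)) as Hinf.
  refine (ultimately_mono _ _ _ (ultimately_and _ _ Hinf ultimately_extension_sparse)).
  intros n [Hinf_n Hsparse_n]. simpl.
  destruct (greedy_admissible C (prefix x n) z) as [HT _].
  rewrite length_prefix in HT.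
  destruct excluded_middle_informative as [_|Hrej]; [now left|].
  exfalso. apply Hrej. split.
  - rewrite length_prefix. now apply Hsparse_n.
  - apply Hinf_n; [apply greedy_in_subsets | exact HT].
Qed.

Lemma Gen_converges : generates_in_limit Gen C (C z) x.
Proof.
  destruct (ultimately_and _ _ ultimately_greedy_selects_target (ultimately_ge (S z)))
    as [N HN].
  exists N. intros n Hn _. destruct (HN n Hn) as [Hz Hlarge].
  unfold gen_output, Gen, respond.
  apply (inter_In C (greedy C (prefix x n) (length (prefix x n)))).
  - apply (greedy_incl C _ (S z)); [rewrite length_prefix; exact Hlarge | exact Hz].
  - apply fresh_in, target_infinite.
Qed.

End Convergence.

Theorem theorem5p1 :
  exists G : generator,
    forall C : collection,
      (forall i : nat, infinite_lang (C i)) ->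
      valid_generator_on G C /\
      (forall (i : nat) (x : nat -> nat),
          enum_o1_noise_omissions (C i) x ->
          generates_in_limit G C (C i) x).
Proof.
  exists Gen. intros C _. split.
  - apply Gen_valid.
  - intros i x [Khat [Hsub [_ [Hx [_ Hcv]]]]].
    apply (Gen_converges C i x Khat Hsub Hx).
    now apply noise_count_ultimately_small.
Qed.
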